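(* Let $A,B\in\operatorname{Sym}(n,\mathbb{R})$ be positive semidefinite with $\operatorname{rank}A\ge2$ and $\operatorname{rank}B\ge2$, and let $D:=\{x\in\mathbb{R}^n:{}^txAx<1\}$, $E:=\{x\in\mathbb{R}^n:{}^txBx<1\}$. Suppose the boundaries of $D$ and $E$ do not intersect transversally anywhere, i.e. $Ax$ and $Bx$ are linearly dependent for every $x$ with ${}^txAx={}^txBx=1$. If $E\cap D\ne\emptyset$, then $E\subset D$ or $D\subset E$. *)

From mathcomp Require Import all_boot all_order all_algebra.
From mathcomp Require Import reals.
Set Implicit Arguments. Unset Strict Implicit. Unset Printing Implicit Defensive.
Import Order.TTheory GRing.Theory Num.Theory.
Local Open Scope ring_scope.

Definition qform (R : realType) (n : nat) (A : 'M[R]_n) (x : 'cV[R]_n) : R :=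
  (x^T *m A *m x) 0 0.

Definition psd (R : realType) (n : nat) (A : 'M[R]_n) : Prop :=
  A^T = A /\ forall x : 'cV[R]_n, 0 <= qform A x.

Definition lin_dep (R : realType) (n : nat) (u v : 'cV[R]_n) : Prop :=
  (\rank (row_mx u v) <= 1)%N.

From mathcomp Require Import all_boot all_order all_algebra.
From mathcomp Require Import reals.
From mathcomp Require Import ring lra.
From Stdlib Require Import Classical.
Import Order.TTheory GRing.Theory Num.Theory.
Local Open Scope ring_scope.

(* The difference Q := qA - qB is a quadratic form.  Tangency of the two
   boundaries says that every Q-isotropic vector y lies in the radical of Q:
   if qA y = qB y > 0, rescale y onto both boundaries, where Ay and By are
   proportional, hence equal; if qA y = qB y = 0, positive semidefiniteness
   already puts y in the radicals of A and B.  A quadratic form whose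
   isotropic vectors all lie in its radical is semidefinite: if Q p > 0 > Q q,
   some y = p + t q is isotropic, and Q(p, y) = Q(q, y) = 0 gives
   Q p = t^2 Q q <= 0.  So Q has a constant sign, i.e. one ellipsoid contains
   the other. *)

Section QuadraticForms.
Set Implicit Arguments. Unset Strict Implicit.
Variables (R : realType) (n : nat).
Implicit Types (M : 'M[R]_n) (x y z : 'cV[R]_n).

Definition bilform M x y : R := (x^T *m M *m y) 0 0.

Lemma qformE M x : qform M x = bilform M x x.
Proof. by []. Qed.

Lemma bilformDr M x y z : bilform M x (y + z) = bilform M x y + bilform M x z.
Proof. by rewrite /bilform mulmxDr mxE. Qed.

Lemma bilformZr M x y (t : R) : bilform M x (t *: y) = t * bilform M x y.
Proof. by rewrite /bilform -scalemxAr mxE. Qed.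

Lemma bilformDl M x y z : bilform M (y + z) x = bilform M y x + bilform M z x.
Proof. by rewrite /bilform linearD /= !mulmxDl mxE. Qed.

Lemma bilformZl M x y (t : R) : bilform M (t *: y) x = t * bilform M y x.
Proof. by rewrite /bilform linearZ /= -!scalemxAl mxE. Qed.

Lemma bilformBm M1 M2 x y :
  bilform (M1 - M2) x y = bilform M1 x y - bilform M2 x y.
Proof. by rewrite /bilform mulmxBr mulmxBl !mxE. Qed.

Lemma bilformC M x y : M^T = M -> bilform M x y = bilform M y x.
Proof.
move=> symM; rewrite /bilform; have -> : y^T *m M *m x = (x^T *m M *m y)^T.
  by rewrite !trmx_mul trmxK symM mulmxA.
by rewrite [RHS]mxE.
Qed.

Lemma bilform_expand M y z (t : R) : M^T = M ->
  bilform M (y + t *: z) (y + t *: z) =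
  bilform M y y + 2 * t * bilform M y z + t ^+ 2 * bilform M z z.
Proof.
move=> symM; rewrite !(bilformDl, bilformDr, bilformZl, bilformZr).
by rewrite (bilformC y z symM); ring.
Qed.

Lemma psd_isotropic_radical M y z : psd M ->
  bilform M y y = 0 -> bilform M z y = 0.
Proof.
move=> [symM M_ge0] yy0.
set b := bilform M z y; set g := bilform M z z.
have g_ge0 : 0 <= g by exact: M_ge0.
have w_gt0 : 0 < (g + 1)^-1 by rewrite invr_gt0; lra.
set w := (g + 1)^-1 in w_gt0 *.
have wg : w * g = 1 - w.
  have : w * (g + 1) = 1 by rewrite mulVf //; apply/eqP; lra.
  by rewrite mulrDr mulr1 => <-; ring.
(* The test vector y - b w z, w = 1 / (g + 1), has Q-value -b^2 w (1 + w). *)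
have := M_ge0 (y + (- b * w) *: z).
rewrite qformE bilform_expand // yy0 (bilformC y z symM) -/b -/g => Q_ge0.
have b2_le0 : b ^+ 2 * (w * (1 + w)) <= 0 by nra.
have : b ^+ 2 = 0 by move: (sqr_ge0 b); nra.
by move/eqP; rewrite sqrf_eq0 => /eqP.
Qed.

Lemma lin_dep_proportional (u v : 'cV[R]_n) :
  u != 0 -> lin_dep u v -> exists k, v = k *: u.
Proof.
move=> u_neq0 rk_le1.
have rk_tr : \rank (row_mx u v) = \rank (u^T + v^T)%MS.
  by rewrite -mxrank_tr tr_row_mx addsmxE.
have [/sub_rVP [k vk]|v_notin] := boolP (v^T <= u^T)%MS.
  by exists k; rewrite -[v]trmxK vk linearZ /= trmxK.
have ut_neq0 : u^T != 0.
  by apply: contra u_neq0 => /eqP ut0; rewrite -[u]trmxK ut0 linear0.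
have : (u^T < u^T + v^T)%MS.
  by rewrite ltmxE addsmxSl addsmx_sub negb_and v_notin orbT.
move/rank_ltmx; rewrite -rk_tr rank_rV ut_neq0.
by move=> /leq_trans /(_ rk_le1).
Qed.

Lemma tangent_common_boundary_eq A B x :
  qform A x = 1 -> qform B x = 1 -> lin_dep (A *m x) (B *m x) ->
  A *m x = B *m x.
Proof.
move=> qAx qBx dep.
have Ax_neq0 : A *m x != 0.
  apply/eqP => Ax0; move/eqP: qAx.
  by rewrite /qform -mulmxA Ax0 mulmx0 mxE eq_sym oner_eq0.
have [k Bx] := lin_dep_proportional Ax_neq0 dep.
suff k1 : k = 1 by rewrite Bx k1 scale1r.
move: qBx; rewrite /qform -mulmxA Bx -scalemxAr mxE mulmxA.
by rewrite -/(qform A x) qAx mulr1.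
Qed.

Lemma tangent_isotropic_radical A B y z : psd A -> psd B ->
  (forall x, qform A x = 1 -> qform B x = 1 -> lin_dep (A *m x) (B *m x)) ->
  bilform (A - B) y y = 0 -> bilform (A - B) z y = 0.
Proof.
move=> psdA psdB tangent.
rewrite !bilformBm => /eqP; rewrite subr_eq0 => /eqP qAB.
apply/eqP; rewrite subr_eq0; apply/eqP.
have [qAy0|qAy_gt0] := eqVneq (bilform A y y) 0.
  rewrite (psd_isotropic_radical z psdA qAy0).
  by rewrite (psd_isotropic_radical z psdB) // -qAB.
have {qAy_gt0}qAy_gt0 : 0 < bilform A y y.
  by rewrite lt_def qAy_gt0; exact: (proj2 psdA y).
set r := (Num.sqrt (bilform A y y))^-1.
have r_neq0 : r != 0 by rewrite invr_eq0 gt_eqF // sqrtr_gt0.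
have rry : r * (r * bilform A y y) = 1.
  rewrite mulrA -expr2 exprVn sqr_sqrtr ?mulVf ?ltW //; exact: lt0r_neq0.
have qAry : qform A (r *: y) = 1 by rewrite qformE bilformZl bilformZr rry.
have qBry : qform B (r *: y) = 1 by rewrite qformE bilformZl bilformZr -qAB rry.
have Ary := tangent_common_boundary_eq qAry qBry (tangent _ qAry qBry).
have : bilform A z (r *: y) = bilform B z (r *: y).
  by rewrite /bilform -!mulmxA Ary.
by rewrite !bilformZr => /(mulfI r_neq0).
Qed.

Lemma isotropic_radical_semidefinite M p q : M^T = M ->
  (forall y z, bilform M y y = 0 -> bilform M z y = 0) ->
  0 < bilform M p p -> bilform M q q < 0 -> False.
Proof.
move=> symM radical a_gt0 c_lt0.
set a := bilform M p p in a_gt0; set c := bilform M q q in c_lt0.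
set b := bilform M p q.
have c_neq0 : c != 0 by rewrite lt_eqF.
set t := (- b - Num.sqrt (b ^+ 2 - a * c)) / c.
have ct : c * t = - b - Num.sqrt (b ^+ 2 - a * c) by rewrite mulrC divfK.
have root_t : a + 2 * t * b + t ^+ 2 * c = 0.
  apply: (mulfI c_neq0); rewrite mulr0.
  have -> : c * (a + 2 * t * b + t ^+ 2 * c) =
            a * c + 2 * b * (c * t) + (c * t) ^+ 2 by ring.
  have disc : Num.sqrt (b ^+ 2 - a * c) ^+ 2 = b ^+ 2 - a * c.
    by rewrite sqr_sqrtr //; nra.
  by rewrite ct; nra.
have iso : bilform M (p + t *: q) (p + t *: q) = 0 by rewrite bilform_expand.
have := radical _ p iso; have := radical _ q iso.
rewrite !(bilformDr, bilformZr) (bilformC q p symM) -/a -/b -/c => qy0 py0.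
have : a = t ^+ 2 * c by nra.
by move: (sqr_ge0 t); nra.
Qed.

End QuadraticForms.

Theorem proposition2p5 (R : realType) (n : nat) (A B : 'M[R]_n) :
  psd A -> psd B ->
  (2 <= \rank A)%N -> (2 <= \rank B)%N ->
  (forall x : 'cV[R]_n, qform A x = 1 -> qform B x = 1 ->
     lin_dep (A *m x) (B *m x)) ->
  (exists x : 'cV[R]_n, qform B x < 1 /\ qform A x < 1) ->
  (forall x : 'cV[R]_n, qform B x < 1 -> qform A x < 1) \/
  (forall x : 'cV[R]_n, qform A x < 1 -> qform B x < 1).
Proof.
move=> psdA psdB _ _ tangent _.
have radical y z : bilform (A - B) y y = 0 -> bilform (A - B) z y = 0.
  exact: tangent_isotropic_radical.
have symAB : (A - B)^T = A - B by rewrite linearB /= (proj1 psdA) (proj1 psdB).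
have [EsubD|/not_all_ex_not [p]] :=
  classic (forall x, qform B x < 1 -> qform A x < 1); first by left.
move=> /(imply_to_and (qform B p < 1)) [qBp /negP]; rewrite -leNgt => qAp.
right => q qAq; rewrite ltNge; apply/negP => qBq.
apply: (isotropic_radical_semidefinite symAB radical (p := p) (q := q)).
  by rewrite bilformBm -!qformE; lra.
by rewrite bilformBm -!qformE; lra.
Qed.
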